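(* If $M$ is a Noetherian commutative monoid, then the terminal space $\mathcal S(M)$ is a Noetherian topological space (every descending chain of closed subsets stabilizes).
   Context: A monoid is a commutative monoid $(M,\cdot,1)$. An ideal of $M$ is a subset $I\subseteq M$ such that $im\in I$ for all $i\in I$, $m\in M$; it is proper if $I\neq M$. $M$ is Noetherian if it satisfies the ascending chain condition on ideals. A proper ideal $K$ of $M$ is strongly irreducible if for all ideals $I,J$ of $M$, $I\cap J\subseteq K$ implies $I\subseteq K$ or $J\subseteq K$. $\mathcal S(M)$ is the set of all strongly irreducible ideals of $M$. For $X\subseteq\mathcal S(M)$, $\mathcal K(X)=\bigcap_{I\in X}I$, and $\mathcal{HK}(X)=\{J\in\mathcal S(M)\mid J\supseteq\mathcal K(X)\}$ if $X\neq\emptyset$, $\mathcal{HK}(\emptyset)=\emptyset$. The terminal space of $M$ is the set $\mathcal S(M)$ with the topology whose closed sets are exactly the sets $\mathcal{HK}(X)$, $X\subseteq\mathcal S(M)$. *)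

(* subsets are predicates [A -> Prop], compared extensionally. *)

Record ComMonoid := {
  carrier :> Type;
  mul : carrier -> carrier -> carrier;
  one : carrier;
  mulA : forall x y z, mul x (mul y z) = mul (mul x y) z;
  mulC : forall x y, mul x y = mul y x;
  mul1m : forall x, mul one x = x
}.

Section Defs.
Variable M : ComMonoid.

Definition subset (A B : M -> Prop) : Prop := forall x, A x -> B x.

Definition ideal (I : M -> Prop) : Prop :=
  forall i m, I i -> I (mul M i m).

Definition proper (I : M -> Prop) : Prop := ~ (forall x : M, I x).

Definition noetherian_monoid : Prop :=
  forall I : nat -> M -> Prop,
    (forall n, ideal (I n)) ->
    (forall n, subset (I n) (I (S n))) ->
    exists N, forall n, N <= n -> forall x, I n x <-> I N x.

Definition strongly_irreducible (K : M -> Prop) : Prop :=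
  ideal K /\ proper K /\
  forall I J : M -> Prop, ideal I -> ideal J ->
    subset (fun x => I x /\ J x) K -> subset I K \/ subset J K.

Definition Kop (X : (M -> Prop) -> Prop) : M -> Prop :=
  fun m => forall I, X I -> I m.

(** HK(X) = { J in S(M) | J ⊇ K(X) } if X nonempty, and ∅ if X = ∅. *)
Definition HK (X : (M -> Prop) -> Prop) : (M -> Prop) -> Prop :=
  fun J => (exists I, X I) /\ strongly_irreducible J /\ subset (Kop X) J.

Definition terminal_closed (C : (M -> Prop) -> Prop) : Prop :=
  exists X : (M -> Prop) -> Prop,
    (forall I, X I -> strongly_irreducible I) /\
    (forall J, C J <-> HK X J).

Definition terminal_space_noetherian : Prop :=
  forall C : nat -> (M -> Prop) -> Prop,
    (forall n, terminal_closed (C n)) ->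
    (forall n, forall J, C (S n) J -> C n J) ->
    exists N, forall n, N <= n -> forall J, C n J <-> C N J.

End Defs.

From Stdlib Require Import Classical.

(* A closed set C of the terminal space is recovered from its
   kernel K(C), the intersection of its members: C consists exactly of the
   strongly irreducible ideals containing K(C).  Indeed, if C = HK(X) then
   K(X) ⊆ K(C), and C is nonempty as soon as some proper ideal contains K(C)
   (the kernel of the empty family is all of M).  Hence a descending chain of
   closed sets C_0 ⊇ C_1 ⊇ ... yields an ascending chain of ideals
   K(C_0) ⊆ K(C_1) ⊆ ..., which stabilizes because M is Noetherian; once the
   kernels agree, so do the closed sets. *)

Section TerminalSpace.
Variable M : ComMonoid.

Lemma Kop_ideal (X : (M -> Prop) -> Prop) :
  (forall I, X I -> ideal M I) -> ideal M (Kop M X).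
Proof.
  intros HX i m Hi I HI. apply (HX I HI), Hi, HI.
Qed.

Lemma Kop_antitone (X Y : (M -> Prop) -> Prop) :
  (forall I, Y I -> X I) -> subset M (Kop M X) (Kop M Y).
Proof.
  intros HYX x Hx I HI. apply Hx, HYX, HI.
Qed.

Lemma closed_member (C : (M -> Prop) -> Prop) (J : M -> Prop) :
  terminal_closed M C -> C J ->
  strongly_irreducible M J /\ subset M (Kop M C) J.
Proof.
  intros [X [_ HC]] HJ. split.
  - apply HC in HJ as [_ [SJ _]]. exact SJ.
  - intros x Hx. apply Hx, HJ.
Qed.

Lemma closed_of_kernel (C : (M -> Prop) -> Prop) (J : M -> Prop) :
  terminal_closed M C -> strongly_irreducible M J ->
  subset M (Kop M C) J -> C J.
Proof.
  intros [X [_ HC]] SJ KJ.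
  (* Every member of C = HK(X) contains K(X), so K(X) ⊆ K(C) ⊆ J. *)
  assert (KXJ : subset M (Kop M X) J).
  { intros x Hx. apply KJ. intros I HI. apply HC in HI as [_ [_ KI]]. apply KI, Hx. }
  apply HC. split; [|split; [exact SJ | exact KXJ]].
  (* X is nonempty: otherwise C is empty, K(C) = M, and J would not be proper. *)
  apply NNPP. intros Hempty. destruct SJ as [_ [Hproper _]]. apply Hproper.
  intros x. apply KJ. intros I HI. apply HC in HI as [HX _]. contradiction.
Qed.

Lemma descending_chain_le (C : nat -> (M -> Prop) -> Prop) :
  (forall n J, C (S n) J -> C n J) ->
  forall n m J, n <= m -> C m J -> C n J.
Proof.
  intros Hdesc n m J Hnm. induction Hnm as [|m _ IH]; intros HJ.
  - exact HJ.
  - apply IH, Hdesc, HJ.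
Qed.

End TerminalSpace.

Theorem proposition2p10 (M : ComMonoid) :
  noetherian_monoid M -> terminal_space_noetherian M.
Proof.
  intros HN C Hcl Hdesc.
  destruct (HN (fun n => Kop M (C n))) as [N HNst].
  - intros n. apply Kop_ideal. intros I HI. apply (closed_member M (C n) I (Hcl n) HI).
  - intros n. apply Kop_antitone, Hdesc.
  - exists N. intros n Hn J. split.
    + apply (descending_chain_le M C Hdesc N n J Hn).
    + (* Past N the kernels agree, and a closed set is determined by its kernel. *)
      intros HJ. destruct (closed_member M (C N) J (Hcl N) HJ) as [SJ KJ].
      apply (closed_of_kernel M (C n) J (Hcl n) SJ).
      intros x Hx. apply KJ, (proj1 (HNst n Hn x)), Hx.
Qed.
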